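(* For nonnegative integers $a,c$ put $\overline{\mathrm{gf}}(a,c)=\mathrm{gf}(a,a,c,0)$ if $c\ge a$ and $\overline{\mathrm{gf}}(a,c)=0$ if $c<a$; explicitly, for $c\ge a$, $$\overline{\mathrm{gf}}(a,c)=(2q^a)^{a-c}\prod_{j=1}^{c-a}\frac{(Xq^{j-1}+Yq^{1-j})(1-q^{2a+2j})}{1-q^{2j}}.$$ Then for every positive integer $n$, every nonnegative integer $d$, and all nonnegative integers $a_1<a_2<\dots<a_n$ and $c_1<c_2<\dots<c_n$ with $a_i\le c_i$ for all $i$, $$\det\left(\overline{\mathrm{gf}}(a_i+d,c_j+d)\right)_{i,j=1}^n=\det\left(\overline{\mathrm{gf}}(a_i,c_j)\right)_{i,j=1}^n\cdot\prod_{k=1}^n\left(\frac{(q^{2d+2};q^2)_{c_k}}{q^{dc_k}(q^2;q^2)_{c_k}}\cdot\frac{q^{da_k}(q^2;q^2)_{a_k}}{(q^{2d+2};q^2)_{a_k}}\right).$$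
   Context: $X,Y,q$ are indeterminates and $(u;p)_n=\prod_{j=0}^{n-1}(1-up^j)$. Lattice paths in $\mathbb Z\times\mathbb Z$ use unit steps right, $(s,t)\to(s+1,t)$, and down, $(s,t)\to(s,t-1)$; a right step from $(s,t)$ has weight $\frac{Xq^{s-2t}+Yq^{2t-s}}{2}$, a down step weight $1$, a path's weight is the product of its step weights, and $\mathrm{gf}(a,b,c,d)$ is the sum of the weights of all paths from $(a,b)$ to $(c,d)$. *)

From HB Require Import structures.
From mathcomp Require Import all_boot all_order all_algebra.
Set Implicit Arguments. Unset Strict Implicit. Unset Printing Implicit Defensive.
Import Order.TTheory GRing.Theory Num.Theory.
Local Open Scope ring_scope.

(* The field Q(X,Y,q) of rational functions in three indeterminates,
   realized as the fraction field of Q[X][Y][q] (iterated polynomials). *)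
Definition Rpoly := {poly {poly {poly rat}}}.
Definition K := {fraction Rpoly}.

Definition Xv : K := tofrac (('X%:P)%:P : Rpoly).
Definition Yv : K := tofrac (('X%:P) : Rpoly).
Definition qv : K := tofrac ('X : Rpoly).

Definition qpoch (u p : K) (n : nat) : K := \prod_(j < n) (1 - u * p ^+ j).

Definition rweight (s t : int) : K :=
  (Xv * qv ^ (s - 2 * t) + Yv * qv ^ (2 * t - s)) / 2.

(* weight of a path starting at (s,t), encoded as a sequence of steps:
   true = right step (s,t)->(s+1,t), false = down step (s,t)->(s,t-1). *)
Fixpoint pweight (s t : int) (p : seq bool) : K :=
  match p with
  | [::] => 1
  | true :: p' => rweight s t * pweight (s + 1) t p'
  | false :: p' => pweight s (t - 1) p'
  end.

(* gf(a,b,c,d): sum of the weights of all lattice paths from (a,b) to (c,d).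
   Such a path exists iff a <= c and d <= b; it then consists of exactly
   c-a right steps and b-d down steps in some order. *)
Definition gf (a b c d : int) : K :=
  if (a <= c) && (d <= b) then
    \sum_(p : (`|c - a| + `|b - d|)%N.-tuple bool | count id p == `|c - a|%N)
       pweight a b p
  else 0.

Definition gfbar (a c : nat) : K :=
  if (a <= c)%N then gf a%:Z a%:Z c%:Z 0 else 0.

From HB Require Import structures.
From mathcomp Require Import all_boot all_order all_algebra.
From mathcomp Require Import ring zify.
Import Order.TTheory GRing.Theory Num.Theory.
Local Open Scope ring_scope.

(* The determinant identity holds because it already holds
   entrywise: there are scalars h(a) and f(c) with
     gfbar (a + d) (c + d) = h(a) * gfbar a c * f(c),
   so the left matrix is diag(h) * M * diag(f), and the determinant of a
   diagonal matrix is the product of its entries.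

   The scaling relation comes from a closed product formula for weighted
   path sums.  Let [pathsum s t n m] be the total weight of the step sequences
   of length n with m right steps starting at (s,t).  Splitting off the first
   step gives a two-term recurrence; by induction on n one proves
     pathsum * (q^2;q^2)_m * (q^2;q^2)_k * q^(k m)
        = (q^2;q^2)_(m+k) * prod_(j<m) w(q^(s-2t+k+j))          (k = n - m),
   where w(e) = (X e + Y / e) / 2 is the weight of a right step; the
   inductive step is a three-term rational identity for w.  Specialised to
   gfbar, this formula makes the scaling relation a field computation. *)

Definition pathsum (s t : int) (n m : nat) : K :=
  \sum_(p : n.-tuple bool | count id p == m) pweight s t p.

Lemma pathsum0 s t m : pathsum s t 0 m = (m == 0)%:R.
Proof.
rewrite /pathsum big_mkcond (big_pred1 [tuple]) => [|p]; last first.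
  by apply/esym/eqP; apply: tuple0.
by case: m.
Qed.

Lemma pathsumS s t n m : pathsum s t n.+1 m =
  (if m is m'.+1 then rweight s t * pathsum (s + 1) t n m' else 0) +
  pathsum s (t - 1) n m.
Proof.
rewrite /pathsum (reindex (fun x : bool * n.-tuple bool => [tuple of x.1 :: x.2])) /=;
  last first.
  exists (fun p : n.+1.-tuple bool => (thead p, [tuple of behead p])).
    by move=> [b p] _ /=; congr pair; apply: val_inj.
  by move=> p _; rewrite [RHS]tuple_eta.
rewrite big_mkcond -(pair_bigA _ (fun b (p : n.-tuple bool) =>
   if count id (b :: p) == m then pweight s t (b :: p) else 0)) big_bool /=.
congr (_ + _); last by rewrite [RHS]big_mkcond.
case: m => [|m]; first by rewrite big1.
rewrite mulr_sumr [RHS]big_mkcond; apply: eq_bigr => p _.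
by rewrite /= eqSS; case: ifP.
Qed.

Lemma pathsum_gt s t n m : (n < m)%N -> pathsum s t n m = 0.
Proof.
move=> ltnm; rewrite /pathsum big1 // => p /eqP cnt.
by move: (count_size id p); rewrite size_tuple cnt leqNgt ltnm.
Qed.

Lemma pathsum_n0 n s t : pathsum s t n 0 = 1.
Proof. by elim: n t => [|n IH] t; rewrite ?pathsum0 // pathsumS add0r IH. Qed.

Lemma qv_neq0 : qv != 0.
Proof. by rewrite /qv tofrac_eq0 polyX_eq0. Qed.

Lemma qvX_neq0 (k : nat) : qv ^+ k != 0.
Proof. exact: expf_neq0 qv_neq0. Qed.

Lemma two_neq0 : (2 : K) != 0.
Proof.
have -> : (2 : K) = tofrac (((2%:R : rat)%:P%:P)%:P : Rpoly).
  by rewrite !polyC_natr rmorph_nat.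
by rewrite tofrac_eq0 !polyC_eq0 pnatr_eq0.
Qed.

Lemma oneBqX_neq0 k : (0 < k)%N -> 1 - qv ^+ k != 0.
Proof.
move=> k_gt0; rewrite -tofracXn -tofrac1 -tofracB tofrac_eq0 subr_eq0.
apply/eqP => eq1X; move: (@size_polyXn {poly {poly rat}} k).
by rewrite -eq1X size_poly1 => -[kE]; rewrite -kE in k_gt0.
Qed.

Definition weight {F : fieldType} (X Y e : F) : F := (X * e + Y / e) / 2.
Notation stepw := (weight Xv Yv).

Lemma rweightE s t : rweight s t = stepw (qv ^ (s - 2 * t)).
Proof. by rewrite /rweight /weight invr_expz opprB. Qed.

Definition wprod (e : int) (m : nat) : K := \prod_(j < m) stepw (qv ^ (e + j%:Z)).

Lemma wprodSl e m : wprod e m.+1 = stepw (qv ^ e) * wprod (e + 1) m.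
Proof.
rewrite /wprod big_ord_recl addr0; congr (_ * _).
by apply: eq_bigr => j _; rewrite lift0 -addrA; congr (stepw (qv ^ (_ + _))).
Qed.

Lemma wprodSr e m : wprod e m.+1 = wprod e m * stepw (qv ^ (e + m%:Z)).
Proof. by rewrite /wprod big_ord_recr. Qed.

Lemma pathsum_nn n s t : pathsum s t n n = wprod (s - 2 * t) n.
Proof.
elim: n s => [|n IH] s; first by rewrite pathsum0 /wprod big_ord0.
rewrite pathsumS (@pathsum_gt s (t - 1) n n.+1 (ltnSn n)) addr0 IH wprodSl rweightE.
by congr (_ * wprod _ _); lia.
Qed.

Definition qfac (x : nat) : K := qpoch (qv ^+ 2) (qv ^+ 2) x.
Definition qfacsh (d x : nat) : K := qpoch (qv ^+ (2 * d + 2)) (qv ^+ 2) x.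

Lemma qfac0 : qfac 0 = 1.
Proof. by rewrite /qfac /qpoch big_ord0. Qed.

Lemma qfacS x : qfac x.+1 = qfac x * (1 - (qv ^+ x * qv) ^+ 2).
Proof.
rewrite /qfac /qpoch big_ord_recr /= -exprSr; congr (_ * (1 - _)).
by rewrite -exprS -!exprM mulnC.
Qed.

Lemma qfac_neq0 x : qfac x != 0.
Proof.
elim: x => [|x IH]; first by rewrite qfac0; exact: oner_neq0.
rewrite qfacS; apply: mulf_neq0 IH _.
by rewrite -exprSr -exprM; apply: oneBqX_neq0.
Qed.

Lemma qfacD d x : qfac (d + x) = qfac d * qfacsh d x.
Proof.
rewrite /qfac /qfacsh /qpoch big_split_ord /=; congr (_ * _).
apply: eq_bigr => j _; congr (1 - _).
by rewrite -!exprM -!exprD; congr (_ ^+ _); lia.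
Qed.

Lemma qfacsh_neq0 d x : qfacsh d x != 0.
Proof.
by apply: contraNneq (qfac_neq0 (d + x)) => eq0; rewrite qfacD eq0 mulr0.
Qed.

(* Three-term relation for the weights; with r = q^e, x = q^k, y = q^m it
   drives the inductive step of the closed formula. *)
Lemma weight_rec {F : fieldType} (X Y : F) {r x y q : F} :
  (2 : F) != 0 -> r != 0 -> x != 0 -> y != 0 -> q != 0 ->
  weight X Y r * (1 - (y * q) ^+ 2) * x * q +
  (1 - (x * q) ^+ 2) * y * q * weight X Y (r * ((x * q) * (q * y)))
  = (1 - (y * x * (q * q)) ^+ 2) * weight X Y (r * (x * q)).
Proof. by move=> two0 r0 x0 y0 q0; rewrite /weight; field; rewrite two0 q0 x0 r0 y0. Qed.

(* The inductive step, abstracted over a field: the two instances of the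
   induction hypothesis combine through the three-term relation. *)
Lemma closed_step (F : fieldType) (T1 T2 Dm Dk Dn P x y q W0 W1 W2 z : F) :
  T1 * Dm * (Dk * (1 - (x * q) ^+ 2)) * (z * y) = Dn * P ->
  T2 * (Dm * (1 - (y * q) ^+ 2)) * Dk * (z * x) = Dn * (P * W2) ->
  W0 * (1 - (y * q) ^+ 2) * x * q + (1 - (x * q) ^+ 2) * y * q * W2 =
    (1 - (y * x * (q * q)) ^+ 2) * W1 ->
  (W0 * T1 + T2) * (Dm * (1 - (y * q) ^+ 2)) * (Dk * (1 - (x * q) ^+ 2)) *
    (z * x * y * q) = Dn * (1 - (y * x * (q * q)) ^+ 2) * (W1 * P).
Proof.
move=> IH1 IH2 rec.
transitivity (W0 * (1 - (y * q) ^+ 2) * x * q *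
    (T1 * Dm * (Dk * (1 - (x * q) ^+ 2)) * (z * y)) +
  (1 - (x * q) ^+ 2) * y * q * (T2 * (Dm * (1 - (y * q) ^+ 2)) * Dk * (z * x)));
  first ring.
rewrite IH1 IH2; transitivity (Dn * P * (W0 * (1 - (y * q) ^+ 2) * x * q +
  (1 - (x * q) ^+ 2) * y * q * W2)); first ring.
by rewrite rec; ring.
Qed.

Definition closed_form (s t : int) (m k : nat) : Prop :=
  pathsum s t (m + k) m * qfac m * qfac k * qv ^+ (k * m) =
  qfac (m + k) * wprod (s - 2 * t + k%:Z) m.

Lemma closed_formS (s t : int) (m k : nat) :
  closed_form (s + 1) t m k.+1 -> closed_form s (t - 1) m.+1 k ->
  closed_form s t m.+1 k.+1.
Proof.
rewrite /closed_form !addnS !addSn.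
move sizeE : (m + k).+1 => n IH1 IH2.
set e := s - 2 * t.
set P := wprod (e + k.+2%:Z) m.
have qvzD (j : nat) : qv ^ (e + j%:Z) = qv ^ e * qv ^+ j by rewrite expfzDr ?qv_neq0.
have P1 : wprod (s + 1 - 2 * t + k.+1%:Z) m = P by congr wprod; lia.
have P2 : wprod (s - 2 * (t - 1) + k%:Z) m.+1 = P * stepw (qv ^ (e + (k.+2 + m)%N%:Z)).
  by rewrite wprodSr; congr (wprod _ _ * stepw (qv ^ _)); lia.
have P3 : wprod (e + k.+1%:Z) m.+1 = stepw (qv ^ e * (qv ^+ k * qv)) * P.
  by rewrite wprodSl qvzD exprSr; congr (_ * wprod _ _); lia.
have hz : qv ^+ (k.+1 * m.+1) = qv ^+ (k * m) * qv ^+ k * qv ^+ m * qv.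
  by rewrite -!exprD -exprSr; congr (_ ^+ _); lia.
have hn : qv ^+ n * qv = qv ^+ m * qv ^+ k * (qv * qv).
  by rewrite -expr2 -!exprD -exprSr; congr (_ ^+ _); lia.
have h1 : qv ^+ (k.+1 * m) = qv ^+ (k * m) * qv ^+ m.
  by rewrite -exprD; congr (_ ^+ _); lia.
have h2 : qv ^+ (k * m.+1) = qv ^+ (k * m) * qv ^+ k.
  by rewrite -exprD; congr (_ ^+ _); lia.
have hW : qv ^ (e + (k.+2 + m)%N) = qv ^ e * ((qv ^+ k * qv) * (qv * qv ^+ m)).
  by rewrite qvzD -exprSr -exprS -exprD; congr (_ * _ ^+ _); lia.
rewrite P1 h1 qfacS in IH1; rewrite P2 h2 hW qfacS in IH2.
rewrite pathsumS rweightE -/e P3 hz !qfacS hn.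
apply: closed_step IH1 IH2 _.
exact: (weight_rec Xv Yv two_neq0 (expfz_neq0 e qv_neq0) (qvX_neq0 k) (qvX_neq0 m)
  qv_neq0).
Qed.

Lemma pathsum_closed (m k : nat) (s t : int) : closed_form s t m k.
Proof.
elim: m k s t => [|m IHm] k s t.
  by rewrite /closed_form muln0 pathsum_n0 qfac0 /wprod big_ord0 !mul1r !mulr1.
elim: k s t => [|k IHk] s t.
  by rewrite /closed_form mul0n addn0 pathsum_nn qfac0 !mulr1 mulrC addr0.
exact: closed_formS (IHm _ _ _) (IHk _ _).
Qed.

Lemma gfbar_pathsum a c : (a <= c)%N -> gfbar a c = pathsum a a (c - a + a) (c - a).
Proof.
move=> le_ac; rewrite /gfbar le_ac /gf ifT; last first.
  by apply/andP; split; [rewrite lez_nat | exact: le0z_nat].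
by rewrite subzn // subr0 !absz_nat.
Qed.

(* Closed form of gfbar; the weight product no longer depends on a. *)
Lemma gfbar_closed a c : (a <= c)%N ->
  gfbar a c * qfac (c - a) * qfac a * qv ^+ (a * (c - a)) =
  qfac c * wprod 0 (c - a).
Proof.
move=> le_ac; rewrite gfbar_pathsum //.
have := pathsum_closed (c - a) a a a; rewrite /closed_form => ->.
rewrite subnK //.
by congr (_ * wprod _ _); lia.
Qed.

(* Solving two such product relations sharing the weight product W for the
   two unknowns G0, G1 expresses G1 as a rescaling of G0. *)
Lemma rescale_solution {F : fieldType} {G0 G1 Dm Da Dd Dc Pa Pc W A B C : F} :
  Dm != 0 -> Da != 0 -> Dd != 0 -> Dc != 0 -> Pa != 0 ->
  A != 0 -> B != 0 -> C != 0 ->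
  G0 * Dm * Da * A = Dc * W ->
  G1 * Dm * (Dd * Pa) * (A * B) = (Dd * Pc) * W ->
  G1 = (C * Da) / Pa * G0 * (Pc / ((B * C) * Dc)).
Proof.
move=> Dm0 Da0 Dd0 Dc0 Pa0 A0 B0 C0 G0E G1E.
have -> : G1 = Dd * Pc * W / (Dm * (Dd * Pa) * (A * B)).
  by rewrite -G1E; field; rewrite Dm0 Dd0 Pa0 A0 B0.
have -> : G0 = Dc * W / (Dm * Da * A).
  by rewrite -G0E; field; rewrite Dm0 Da0 A0.
by field; rewrite Dm0 Da0 Dd0 Dc0 Pa0 A0 B0 C0.
Qed.

Definition rowfac (d x : nat) : K := (qv ^+ (d * x) * qfac x) / qfacsh d x.
Definition colfac (d x : nat) : K := qfacsh d x / (qv ^+ (d * x) * qfac x).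

Lemma gfbar_shift a c d : gfbar (a + d)%N (c + d)%N = rowfac d a * gfbar a c * colfac d c.
Proof.
have [le_ac | lt_ca] := leqP a c; last first.
  by rewrite /gfbar leqNgt ltn_add2r lt_ca leqNgt lt_ca mulr0 mul0r.
have G0E := gfbar_closed _ _ le_ac.
have := gfbar_closed _ _ (leq_add le_ac (leqnn d)).
rewrite subnDr (addnC a d) (addnC c d) !qfacD => G1E.
have qdc : qv ^+ (d * c) = qv ^+ (d * (c - a)) * qv ^+ (d * a).
  by rewrite -exprD -mulnDr subnK.
have qda : qv ^+ ((d + a) * (c - a)) = qv ^+ (a * (c - a)) * qv ^+ (d * (c - a)).
  by rewrite -exprD -mulnDl addnC.
rewrite qda in G1E; rewrite /rowfac /colfac qdc.
apply: (rescale_solution _ _ _ _ _ _ _ _ G0E G1E);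
  by [apply: qfac_neq0 | apply: qfacsh_neq0 | apply: qvX_neq0].
Qed.

Theorem mainTheorem8 (n d : nat) (a c : 'I_n -> nat) :
  (0 < n)%N ->
  (forall i j : 'I_n, (i < j)%N -> (a i < a j)%N) ->
  (forall i j : 'I_n, (i < j)%N -> (c i < c j)%N) ->
  (forall i : 'I_n, (a i <= c i)%N) ->
  \det (\matrix_(i < n, j < n) gfbar (a i + d) (c j + d)) =
  \det (\matrix_(i < n, j < n) gfbar (a i) (c j)) *
  \prod_(k < n)
    ((qpoch (qv ^+ (2 * d + 2)) (qv ^+ 2) (c k) /
        (qv ^+ (d * c k) * qpoch (qv ^+ 2) (qv ^+ 2) (c k))) *
     ((qv ^+ (d * a k) * qpoch (qv ^+ 2) (qv ^+ 2) (a k)) /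
        qpoch (qv ^+ (2 * d + 2)) (qv ^+ 2) (a k))).
Proof.
move=> _ _ _ _.
set M := \matrix_(i < n, j < n) gfbar (a i) (c j).
have -> : \matrix_(i < n, j < n) gfbar (a i + d) (c j + d) =
    diag_mx (\row_i rowfac d (a i)) *m M *m diag_mx (\row_j colfac d (c j)).
  by apply/matrixP => i j; rewrite mul_mx_diag mul_diag_mx !mxE gfbar_shift.
rewrite !det_mulmx !det_diag.
rewrite [X in _ = _ * X](eq_bigr (fun k => colfac d (c k) * rowfac d (a k))) //.
rewrite big_split /=.
under eq_bigr do rewrite mxE.
under [X in _ * X]eq_bigr do rewrite mxE.
by rewrite mulrC mulrA [_ * \det M]mulrC.
Qed.
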